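(* Let $(V_1,\dots,V_n)$ be an $n$-tuple of doubly non-commuting isometries on a Hilbert space $H$. For $A\subseteq\{1,\dots,n\}$ put $P_A=\prod_{i\in A}P_i^{\mathrm{iso}}\prod_{i\in A^c}P_i^{\mathrm{uni}}$ and $H_A=P_A(H)$. Then $H_A=\bigcap_{i\in A}H^{\mathrm{iso}}(V_i)\cap\bigcap_{i\in A^c}H^{\mathrm{uni}}(V_i)$, and $H=\bigoplus_{A\subseteq\{1,\dots,n\}}H_A$ is an orthogonal Hilbert direct sum in which every $H_A$ reduces every $V_i$; for all $A$ and $i$, $V_i|_{H_A}$ is a pure isometry if $i\in A$ and unitary if $i\in A^c$. Furthermore, if $L$ is a subspace of $H$ reducing all of $V_1,\dots,V_n$ and $A\subseteq\{1,\dots,n\}$, with $P_L$ the projection onto $L$, the following are equivalent: (1) $V_i|_L$ is a pure isometry for all $i\in A$ and unitary for all $i\in A^c$; (2) $L\subseteq H_A$; (3) $P_LP_A=P_L$.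
   Context: Fix $n\ge1$ and $z_{ij}\in\mathbb T$ ($i\ne j$) with $z_{ji}=\overline{z_{ij}}$; $(V_1,\dots,V_n)$ is doubly non-commuting if the $V_i$ are isometries with $V_i^*V_j=\overline{z_{ij}}V_jV_i^*$ for $i\ne j$. Subspaces are closed, projections orthogonal, $A^c$ is the complement of $A$ in $\{1,\dots,n\}$, empty products are the identity. For an isometry $S$: $H^{\mathrm{iso}}(S)=\bigoplus_{k\ge0}S^k(\ker S^* )$ (orthogonal sum) and $H^{\mathrm{uni}}(S)=\bigcap_{k\ge0}S^k(H)$; $P_i^{\mathrm{iso}},P_i^{\mathrm{uni}}$ are the projections onto $H^{\mathrm{iso}}(V_i),H^{\mathrm{uni}}(V_i)$ (these $2n$ projections commute pairwise, so the order in $P_A$ is irrelevant). For an invariant subspace $L$, $S|_L$ is a pure isometry if $\{0\}$ is the only $S$-invariant subspace of $L$ on which $S$ is unitary. *)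

From HB Require Import structures.
From mathcomp Require Import all_boot all_order all_algebra.
From mathcomp Require Import reals complex.
Set Implicit Arguments. Unset Strict Implicit. Unset Printing Implicit Defensive.
Import Order.TTheory GRing.Theory Num.Theory.
Local Open Scope ring_scope.

Definition nrm2 (R : realType) (V : lmodType R[i]) (dot : V -> V -> R[i])
  (x : V) : R := complex.Re (dot x x).

Definition converges_to (R : realType) (V : lmodType R[i]) (dot : V -> V -> R[i])
  (u : nat -> V) (l : V) : Prop :=
  forall e : R, 0 < e -> exists N, forall m, (N <= m)%N -> nrm2 dot (u m - l) < e.

Definition cauchy_seq (R : realType) (V : lmodType R[i]) (dot : V -> V -> R[i])
  (u : nat -> V) : Prop :=
  forall e : R, 0 < e -> exists N, forall m k, (N <= m)%N -> (N <= k)%N ->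
    nrm2 dot (u m - u k) < e.

Record hilbert (R : realType) := Hilbert {
  hsort :> lmodType R[i];
  hdot : hsort -> hsort -> R[i];
  hdot_linl : forall (a : R[i]) (x x' y : hsort),
      hdot (a *: x + x') y = a * hdot x y + hdot x' y;
  hdot_sym : forall x y : hsort, hdot y x = (hdot x y)^*;
  hdot_ge0 : forall x : hsort, 0 <= hdot x x;
  hdot_eq0 : forall x : hsort, hdot x x = 0 -> x = 0;
  hcomplete : forall u : nat -> hsort, cauchy_seq hdot u ->
      exists l, converges_to hdot u l
}.

Section HilbertDefs.
Variables (R : realType) (H : hilbert R).

Local Notation "<< x , y >>" := (hdot x y).

(* subspaces (always closed linear subspaces), as predicates on H *)
Definition closure (M : H -> Prop) : H -> Prop :=
  fun x => exists u : nat -> H, (forall k, M (u k)) /\ converges_to (@hdot R H) u x.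

Definition is_subspace (M : H -> Prop) : Prop :=
  [/\ M 0,
      (forall (a : R[i]) x y, M x -> M y -> M (a *: x + y))
    & (forall x, closure M x -> M x)].

Definition subset_of (M N : H -> Prop) : Prop := forall x, M x -> N x.

Definition bounded_linear (T : H -> H) : Prop :=
  (forall (a : R[i]) x y, T (a *: x + y) = a *: T x + T y) /\
  exists C : R, forall x, nrm2 (@hdot R H) (T x) <= C * nrm2 (@hdot R H) x.

Definition is_adjoint (T Ts : H -> H) : Prop :=
  forall x y, << T x, y >> = << x, Ts y >>.

Definition orth_proj (M : H -> Prop) (P : H -> H) : Prop :=
  forall x, M (P x) /\ (forall y, M y -> << x - P x, y >> = 0).

Definition range (T : H -> H) : H -> Prop := fun x => exists y, x = T y.

Definition image (T : H -> H) (M : H -> Prop) : H -> Prop :=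
  fun x => exists y, M y /\ x = T y.

Definition kernel (T : H -> H) : H -> Prop := fun x => T x = 0.

(* H^iso(S) = orthogonal sum of the S^k(ker S^* ), k >= 0, i.e. the closed
   linear span of these (mutually orthogonal) subspaces *)
Definition Hiso (S Ss : H -> H) : H -> Prop :=
  closure (fun x => exists (N : nat) (f : nat -> H),
     (forall k, (k < N)%N -> image (iter k S) (kernel Ss) (f k)) /\
     x = \sum_(k < N) f k).

Definition Huni (S : H -> H) : H -> Prop :=
  fun x => forall k, range (iter k S) x.

Definition invariant (T : H -> H) (M : H -> Prop) : Prop :=
  forall x, M x -> M (T x).

Definition reduces (M : H -> Prop) (T Ts : H -> H) : Prop :=
  invariant T M /\ invariant Ts M.

(* restriction of the isometry S to the invariant subspace M is unitary,
   i.e. S maps M onto M *)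
Definition unitary_on (S : H -> H) (M : H -> Prop) : Prop :=
  invariant S M /\ forall y, M y -> exists x, M x /\ S x = y.

Definition pure_on (S : H -> H) (L : H -> Prop) : Prop :=
  invariant S L /\
  forall M, is_subspace M -> subset_of M L -> unitary_on S M ->
    forall x, M x -> x = 0.

Definition doubly_noncommuting (n : nat) (z : 'I_n -> 'I_n -> R[i])
  (V Vs : 'I_n -> H -> H) : Prop :=
  [/\ forall i j, i != j -> `|z i j| = 1 /\ z j i = (z i j)^*,
      forall i, bounded_linear (V i) /\ is_adjoint (V i) (Vs i),
      forall i x, Vs i (V i x) = x
    & forall i j x, i != j -> Vs i (V j x) = (z i j)^* *: V j (Vs i x)].

Definition PA (n : nat) (Piso Puni : 'I_n -> H -> H) (A : {set 'I_n}) : H -> H :=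
  foldr (fun i f => Piso i \o f) id (enum A) \o
  foldr (fun i f => Puni i \o f) id (enum (~: A)).

End HilbertDefs.

From Pilot Require Import Defs.
From HB Require Import structures.
From mathcomp Require Import all_boot all_order all_algebra.
From mathcomp Require Import reals complex.
From mathcomp Require Import ring.
Set Implicit Arguments. Unset Strict Implicit. Unset Printing Implicit Defensive.
Import Order.TTheory GRing.Theory Num.Theory.
Local Open Scope ring_scope.

(* Wold decomposition, one isometry S at a time: a vector orthogonal to every
   wandering subspace S^m(ker S^* ) lies in every S^k(H), so H^uni(S) and
   H^iso(S) are each other's orthogonal complements, P^iso + P^uni = 1, and both
   projections preserve every subspace reducing S.
   For a doubly non-commuting tuple, V_j V_i = conj(z_ij) V_i V_j and
   V_j^* V_i = conj(z_ji) V_i V_j^* show that H^uni(V_i), hence also its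
   complement H^iso(V_i), reduces every V_j.  So all the projections P_j^iso,
   P_j^uni preserve all the factors H^iso(V_i), H^uni(V_i) of H_A: P_A maps onto
   H_A and fixes it, expanding prod_i (P_i^iso + P_i^uni) = 1 decomposes every
   vector along the H_A, and H_A is orthogonal to H_B because H^iso(V_i) is
   orthogonal to H^uni(V_i) for i in the symmetric difference of A and B.
   For a reducing subspace L, V_i|L is unitary iff L is inside H^uni(V_i) and
   pure iff L is inside H^iso(V_i); and P_L P_A = P_L says that the
   contraction P_A fixes L. *)

Section InnerProduct.
Variables (R : realType) (H : hilbert R).
Local Notation "<< x , y >>" := (@hdot R H x y).
Implicit Types (x y w : H).

Lemma dotDl x x' y : <<x + x', y>> = <<x, y>> + <<x', y>>.
Proof. by have := hdot_linl 1 x x' y; rewrite scale1r mul1r. Qed.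

Lemma dot0l y : <<0, y>> = 0.
Proof. by apply/(addrI <<0, y>>); rewrite -dotDl !addr0. Qed.

Lemma dotZl a x y : <<a *: x, y>> = a * <<x, y>>.
Proof. by have := hdot_linl a x 0 y; rewrite !addr0 dot0l addr0. Qed.

Lemma dotBl x x' y : <<x - x', y>> = <<x, y>> - <<x', y>>.
Proof. by rewrite dotDl -scaleN1r dotZl mulN1r. Qed.

Lemma dot0r y : <<y, 0>> = 0.
Proof. by rewrite hdot_sym dot0l conjC0. Qed.

Lemma dotDr x y y' : <<x, y + y'>> = <<x, y>> + <<x, y'>>.
Proof. by rewrite !(hdot_sym _ x) dotDl rmorphD. Qed.

Lemma dotZr a x y : <<x, a *: y>> = a^* * <<x, y>>.
Proof. by rewrite !(hdot_sym _ x) dotZl rmorphM. Qed.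

Lemma dotBr x y y' : <<x, y - y'>> = <<x, y>> - <<x, y'>>.
Proof. by rewrite !(hdot_sym _ x) dotBl rmorphB. Qed.

Lemma dot_suml (I : Type) (r : seq I) (P : pred I) (f : I -> H) y :
  << \sum_(k <- r | P k) f k, y >> = \sum_(k <- r | P k) << f k, y >>.
Proof. by elim/big_rec2: _ => [|k a b _ <-]; [exact: dot0l | exact: dotDl]. Qed.

Lemma dot0_sym x y : <<x, y>> = 0 -> <<y, x>> = 0.
Proof. by move=> E; rewrite hdot_sym E conjC0. Qed.

Lemma eq_dotr x y : (forall w, <<w, x>> = <<w, y>>) -> x = y.
Proof. by move=> E; apply/subr0_eq/hdot_eq0; rewrite dotBr E subrr. Qed.

Lemma cauchy_schwarz x y : `|<<x, y>>| ^+ 2 <= <<x, x>> * <<y, y>>.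
Proof.
have [/hdot_eq0 ->|yy_neq0] := eqVneq <<y, y>> 0.
  by rewrite !dot0r normr0 expr0n mulr0.
pose t := <<y, y>>^-1; pose c := <<x, y>>.
have t_conj : t^* = t by rewrite geC0_conj // invr_ge0 hdot_ge0.
pose w := x - (t * c) *: y.
have conjM : (t * c)^* = t^* * c^* by exact: rmorphM.
have E : <<w, w>> * <<y, y>> = <<x, x>> * <<y, y>> - c * c^*.
  rewrite /w dotBl !dotBr !dotZl !dotZr (hdot_sym x y) conjM t_conj -/c /t.
  by field.
by rewrite normCK -subr_ge0 -E mulr_ge0 ?hdot_ge0.
Qed.

End InnerProduct.

Definition linear_set (R : realType) (H : hilbert R) (M : H -> Prop) : Prop :=
  M 0 /\ forall (a : R[i]) (x y : H), M x -> M y -> M (a *: x + y).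

Definition perp (R : realType) (H : hilbert R) (S : H -> Prop) : H -> Prop :=
  fun x => forall y, S y -> hdot x y = 0.

Definition lin_op (R : realType) (H : hilbert R) (T : H -> H) : Prop :=
  forall (a : R[i]) (x y : H), T (a *: x + y) = a *: T x + T y.

Section LinearOperators.
Variables (R : realType) (H : hilbert R).
Local Notation "<< x , y >>" := (@hdot R H x y).
Implicit Types (x y : H) (M S : H -> Prop) (T Ts : H -> H).

Lemma linear_setB M x y : linear_set M -> M x -> M y -> M (x - y).
Proof. by case=> _ hl hx hy; rewrite addrC -scaleN1r; apply: hl. Qed.

Lemma perp_linear S : linear_set (perp S).
Proof.
split=> [y _|a x y hx hy w hw]; first exact: dot0l.
by rewrite dotDl dotZl hx // hy // mulr0 addr0.
Qed.

Lemma lin_opD T x y : lin_op T -> T (x + y) = T x + T y.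
Proof. by move=> hT; rewrite -[x]scale1r hT !scale1r. Qed.

Lemma lin_op0 T : lin_op T -> T 0 = 0.
Proof. by move=> hT; apply/(addrI (T 0)); rewrite -lin_opD // !addr0. Qed.

Lemma lin_opZ T a x : lin_op T -> T (a *: x) = a *: T x.
Proof. by move=> hT; rewrite -[a *: x]addr0 hT lin_op0 // addr0. Qed.

Lemma lin_opB T x y : lin_op T -> T (x - y) = T x - T y.
Proof. by move=> hT; rewrite -scaleN1r addrC hT addrC scaleN1r. Qed.

Lemma lin_op_iter T k : lin_op T -> lin_op (iter k T).
Proof. by move=> hT; elim: k => [|k IH] a x y //=; rewrite IH hT. Qed.

Lemma adjoint_dotl T Ts x y : is_adjoint T Ts -> <<Ts x, y>> = <<x, T y>>.
Proof. by move=> hadj; rewrite hdot_sym -hadj -hdot_sym. Qed.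

Lemma adjoint_lin_op T Ts : is_adjoint T Ts -> lin_op Ts.
Proof.
move=> hadj a x y; apply: eq_dotr => w.
by rewrite dotDr dotZr -!hadj dotDr dotZr.
Qed.

Lemma perp_reduces M T Ts :
  is_adjoint T Ts -> reduces M T Ts -> reduces (perp M) T Ts.
Proof.
move=> hadj [hT hTs]; split=> x hx y hy; first by rewrite hadj hx //; apply: hTs.
by rewrite (adjoint_dotl _ _ hadj) hx //; apply: hT.
Qed.

End LinearOperators.

Section OrthogonalProjection.
Variables (R : realType) (H : hilbert R).
Local Notation "<< x , y >>" := (@hdot R H x y).
Variables (M : H -> Prop) (P : H -> H).
Hypotheses (hP : orth_proj M P) (hM : linear_set M).
Implicit Types (x y : H).

Lemma proj_in x : M (P x). Proof. by case: (hP x). Qed.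

Lemma proj_perp x : perp M (x - P x). Proof. by case: (hP x). Qed.

Lemma proj_unique x m r : M m -> perp M r -> x = m + r -> P x = m.
Proof.
move=> hm hr E; have hd : M (P x - m) := linear_setB hM (proj_in x) hm.
have dE : P x - m = r - (x - P x).
  by rewrite E [m + r]addrC opprB addrCA opprD addNKr.
apply/eqP; rewrite -subr_eq0; apply/eqP/hdot_eq0.
by rewrite {1}dE dotBl hr // proj_perp // subrr.
Qed.

Lemma proj_id x : M x -> P x = x.
Proof.
move=> hx; apply: (proj_unique (r := 0)); rewrite ?addr0 //.
by move=> y _; exact: dot0l.
Qed.

Lemma proj_eq0 x : perp M x -> P x = 0.
Proof. by move=> hx; apply: (proj_unique (r := x)); rewrite ?add0r //; case: hM. Qed.

Lemma proj_lin_op : lin_op P.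
Proof.
move=> a x y; apply: (proj_unique (r := a *: (x - P x) + (y - P y))).
- by case: hM => _; apply; apply: proj_in.
- by move=> w hw; rewrite dotDl dotZl !proj_perp // mulr0 addr0.
- by rewrite scalerBr addrACA !subrKC.
Qed.

Lemma proj_dot_sym x y : <<P x, y>> = <<x, P y>>.
Proof.
have -> : <<P x, y>> = <<P x, P y>>.
  by rewrite -[in LHS](subrK (P y) y) dotDr (dot0_sym (proj_perp y (proj_in x))) add0r.
by rewrite -[in RHS](subrK (P x) x) dotDl proj_perp ?add0r //; exact: proj_in.
Qed.

Lemma proj_pythagoras x : <<x, x>> = <<P x, P x>> + <<x - P x, x - P x>>.
Proof.
have hperp := proj_perp x (proj_in x).
rewrite -[in LHS](subrK (P x) x) (dotDl (x - P x)) !(dotDr _ (x - P x) (P x)).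
by rewrite hperp (dot0_sym hperp) addr0 add0r addrC.
Qed.

Lemma proj_norm_le x : <<P x, P x>> <= <<x, x>>.
Proof. by rewrite [X in _ <= X]proj_pythagoras lerDl hdot_ge0. Qed.

Lemma proj_id_of_norm x : <<x, x>> <= <<P x, P x>> -> P x = x.
Proof.
rewrite [X in X <= _]proj_pythagoras gerDl => hle.
by apply/esym/subr0_eq/hdot_eq0/eqP; rewrite eq_le hle hdot_ge0.
Qed.

End OrthogonalProjection.

Section ClosedSubspaces.
Variables (R : realType) (H : hilbert R).
Local Notation "<< x , y >>" := (@hdot R H x y).
Implicit Types (x y : H) (G M N S : H -> Prop).

Lemma dot_lim0 (u : nat -> H) x y :
  converges_to (@hdot R H) u x -> (forall k, <<u k, y>> = 0) -> <<x, y>> = 0.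
Proof.
(* Dividing by [1 + <<y, y>>] rather than [<<y, y>>] avoids the case [y = 0]. *)
move=> ux uy; have c_gt0 : 0 < 1 + <<y, y>> by rewrite ltr_wpDr ?hdot_ge0.
pose a : R[i] := `|<<x, y>>| ^+ 2 / (1 + <<y, y>>).
have a_ge0 : 0 <= a by rewrite divr_ge0 ?exprn_ge0 // ltW.
have a_le k : a <= <<u k - x, u k - x>>.
  rewrite ler_pdivrMr // -normrN -(sub0r <<x, y>>) -(uy k) -dotBl.
  apply: le_trans (cauchy_schwarz _ _) _.
  by rewrite ler_wpM2l ?hdot_ge0 ?lerDr.
suff a0 : a = 0.
  move/eqP: a0; rewrite mulf_eq0 invr_eq0 (gt_eqF c_gt0) orbF.
  by rewrite expf_eq0 normr_eq0 => /andP[_ /eqP].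
have aE : ((complex.Re a)%:C)%C = a by apply/RRe_real/ger0_real.
apply/eqP; rewrite eq_le a_ge0 andbT -aE -[0]/(((0 : R)%:C)%C) lecR leNgt.
apply/negP => Ra_gt0; have [N hN] := ux _ Ra_gt0.
have := hN N (leqnn N); rewrite /nrm2 -ltcR aE RRe_real ?ger0_real ?hdot_ge0 //.
by move/lt_geF; rewrite a_le.
Qed.

Lemma closure_perp G S x : (forall w, G w -> perp S w) -> Defs.closure G x -> perp S x.
Proof. by move=> hG [u [hu ux]] y hy; apply: (dot_lim0 ux) => k; apply: hG. Qed.

Lemma perp_subspace S : is_subspace (perp S).
Proof. by case: (perp_linear S) => h0 hl; split=> // x; apply: closure_perp. Qed.

Lemma subspace_linear M : is_subspace M -> linear_set M.
Proof. by case. Qed.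

Lemma subspace_eq M N : (forall x, M x <-> N x) -> is_subspace N -> is_subspace M.
Proof.
move=> MN [h0 hl hc]; split; first by apply/MN.
  by move=> a x y /MN hx /MN hy; apply/MN; apply: hl.
by move=> x [u [hu ux]]; apply/MN/hc; exists u; split=> // k; apply/MN.
Qed.

Lemma subspace_bigcap (I : Type) (Ms : I -> H -> Prop) :
  (forall i, is_subspace (Ms i)) -> is_subspace (fun x => forall i, Ms i x).
Proof.
move=> hMs; split=> [i|a x y hx hy i|x [u [hu ux]] i]; case: (hMs i) => // _ hl hc.
  exact: hl.
by apply: hc; exists u; split=> // k; apply: hu.
Qed.

Lemma subspaceI M N : is_subspace M -> is_subspace N -> is_subspace (fun x => M x /\ N x).
Proof.
move=> [h0 hl hc] [h0' hl' hc']; split=> //.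
  by move=> a x y [? ?] [? ?]; split; [apply: hl | apply: hl'].
by move=> x [u [hu ux]]; split; [apply: hc | apply: hc']; exists u; split=> // k; case: (hu k).
Qed.

End ClosedSubspaces.

Section Isometry.
Variables (R : realType) (H : hilbert R).
Local Notation "<< x , y >>" := (@hdot R H x y).
Implicit Types (x y w : H) (L M : H -> Prop).
Variables (S Ss : H -> H).

Lemma Huni_of_unitary_on L x : unitary_on S L -> L x -> Huni S x.
Proof.
move=> [_ onto] + k; elim: k x => [|k IH] x hx; first by exists x.
by have [x0 [/IH [u ->] <-]] := onto x hx; exists u.
Qed.

Lemma Huni_stable T (c : R[i]) :
  lin_op S -> (forall x, T (S x) = c *: S (T x)) -> Defs.invariant T (Huni S).
Proof.
move=> hS hT; have range_iter k u : exists u', T (iter k S u) = iter k S u'.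
  elim: k u => [|k IH] u; first by exists (T u).
  have [u' hu'] := IH u; exists (c *: u').
  by rewrite /= hT hu' -(lin_opZ _ _ hS) -(lin_opZ _ _ (lin_op_iter k hS)).
by move=> x hx k; have [u ->] := hx k; have [u' ->] := range_iter k u; exists u'.
Qed.

Hypotheses (hS : lin_op S) (hadj : is_adjoint S Ss) (hiso : forall x, Ss (S x) = x).

Lemma dot_iter_iso k x y : <<iter k S x, iter k S y>> = <<x, y>>.
Proof. by elim: k => //= k <-; rewrite hadj hiso. Qed.

Lemma adj_defect_ker w : Ss (w - S (Ss w)) = 0.
Proof. by rewrite (lin_opB _ _ (adjoint_lin_op hadj)) hiso subrr. Qed.

Lemma range_of_adj_norm w : <<Ss w, Ss w>> = <<w, w>> -> S (Ss w) = w.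
Proof.
(* [w - S (Ss w)] lies in [kernel Ss] and has squared norm
   [<<w, w>> - <<Ss w, Ss w>>]. *)
move=> hw; apply/esym/subr0_eq/hdot_eq0; set q := w - S (Ss w).
rewrite {2}/q dotBr (dot0_sym (_ : <<S (Ss w), q>> = 0)); last first.
  by rewrite hadj adj_defect_ker dot0r.
by rewrite /q dotBl hadj hw subrr subr0.
Qed.

Lemma Huni_linear : linear_set (Huni S).
Proof.
split=> [k|a x y hx hy k]; first by exists 0; rewrite lin_op0 //; apply: lin_op_iter.
have [u ->] := hx k; have [v ->] := hy k.
by exists (a *: u + v); rewrite (lin_op_iter k hS).
Qed.

Lemma Huni_invariant : Defs.invariant S (Huni S).
Proof. by apply: (Huni_stable (c := 1)) => // x; rewrite scale1r. Qed.

Lemma Huni_adj_invariant : Defs.invariant Ss (Huni S).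
Proof. by move=> x hx k; have [u ->] := hx k.+1; exists u; rewrite /= hiso. Qed.

Lemma Hiso_wandering m w : Ss w = 0 -> Hiso S Ss (iter m S w).
Proof.
move=> hw; exists (fun _ => iter m S w); split; last first.
  by move=> e e_gt0; exists 0%N => k _; rewrite subrr /nrm2 dot0l.
move=> _; exists m.+1, (fun j => if j == m then iter m S w else 0); split.
  move=> j _; case: eqP => [->|_]; first by exists w.
  exists 0; split; first exact: lin_op0 (adjoint_lin_op hadj).
  by rewrite lin_op0 //; apply: lin_op_iter.
rewrite big_ord_recr /= eqxx big1 ?add0r // => j _.
by rewrite ltn_eqF.
Qed.

Lemma wandering_perp_Huni m w y : Ss w = 0 -> Huni S y -> <<iter m S w, y>> = 0.
Proof.
move=> hw hy; have [u ->] := hy m.+1.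
by rewrite iterSr dot_iter_iso -(adjoint_dotl _ _ hadj) hw dot0l.
Qed.

Lemma Hiso_perp_Huni x : Hiso S Ss x -> perp (Huni S) x.
Proof.
apply: closure_perp => _ [N [f [hf ->]]] y hy; rewrite dot_suml big1 // => j _.
by have [w [hw ->]] := hf j (ltn_ord j); apply: wandering_perp_Huni.
Qed.

Lemma Huni_of_perp_wandering r :
  (forall m w, Ss w = 0 -> <<r, iter m S w>> = 0) -> Huni S r.
Proof.
move=> + k; elim: k r => [|k IH] r hr; first by exists r.
(* [r - S (Ss r)] is a wandering vector orthogonal to [r], hence [0]. *)
have rE : S (Ss r) = r.
  apply/esym/subr0_eq/hdot_eq0; set q := r - S (Ss r).
  have hq : Ss q = 0 := adj_defect_ker r.
  by rewrite {1}/q dotBl (hr 0%N q hq) hadj hq dot0r subrr.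
have [u uE] : Defs.range (iter k S) (Ss r).
  by apply: IH => m w hw; rewrite (adjoint_dotl _ _ hadj) (hr m.+1 w hw).
by exists u; rewrite -[in LHS]rE uE.
Qed.


Lemma perp_Hiso_Huni r : perp (Hiso S Ss) r -> Huni S r.
Proof.
by move=> hr; apply: Huni_of_perp_wandering => m w hw; apply: hr; apply: Hiso_wandering.
Qed.

Lemma Hiso_Huni_eq0 x : Hiso S Ss x -> Huni S x -> x = 0.
Proof. by move=> hi hu; apply: hdot_eq0; apply: Hiso_perp_Huni. Qed.

Lemma unitary_on_of_sub_Huni L : reduces L S Ss -> subset_of L (Huni S) -> unitary_on S L.
Proof.
move=> [hL hLs] hsub; split=> // y hy; exists (Ss y); split; first exact: hLs.
by have [u ->] := hsub y hy 1%N; rewrite /= hiso.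
Qed.

Lemma pure_on_of_sub_Hiso L : reduces L S Ss -> subset_of L (Hiso S Ss) -> pure_on S L.
Proof.
move=> [hL _] hsub; split=> // N _ NL hN y hy.
exact: Hiso_Huni_eq0 (hsub y (NL y hy)) (Huni_of_unitary_on hN hy).
Qed.

Variables (Piso Puni : H -> H).
Hypotheses (hPiso : orth_proj (Hiso S Ss) Piso) (hPuni : orth_proj (Huni S) Puni).

Lemma Hiso_perpE x : Hiso S Ss x <-> perp (Huni S) x.
Proof.
split; first exact: Hiso_perp_Huni.
move=> hx; have hd : Huni S (x - Piso x) by apply/perp_Hiso_Huni/(proj_perp hPiso).
have hPx := proj_in hPiso x.
have xE : x = Piso x.
  apply/subr0_eq/hdot_eq0.
  by rewrite {1}dotBl hx // (Hiso_perp_Huni hPx) // subrr.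
by rewrite xE.
Qed.

Lemma Huni_perpE x : Huni S x <-> perp (Hiso S Ss) x.
Proof.
split; last exact: perp_Hiso_Huni.
by move=> hx y /Hiso_perp_Huni /(_ x hx) /dot0_sym.
Qed.

Lemma Hiso_subspace : is_subspace (Hiso S Ss).
Proof. exact: subspace_eq Hiso_perpE (perp_subspace _). Qed.

Lemma Huni_subspace : is_subspace (Huni S).
Proof. exact: subspace_eq Huni_perpE (perp_subspace _). Qed.

Lemma Piso_add_Puni x : Piso x + Puni x = x.
Proof.
have -> : Puni x = x - Piso x.
  apply: (proj_unique hPuni Huni_linear (r := Piso x)); last by rewrite subrK.
  - exact/perp_Hiso_Huni/(proj_perp hPiso).
  - exact/Hiso_perp_Huni/(proj_in hPiso).
by rewrite subrKC.
Qed.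

Section ReducingSubspace.
Variables (M : H -> Prop) (PM : H -> H).
Hypotheses (hPM : orth_proj M PM) (hM : linear_set M) (hred : reduces M S Ss).

Lemma proj_reducing_comm w : PM (S w) = S (PM w).
Proof.
apply: (proj_unique hPM hM (r := S (w - PM w))).
- by apply: hred.1; exact: proj_in hPM w.
- by move=> y hy; rewrite hadj (proj_perp hPM) //; apply: hred.2.
- by rewrite -lin_opD // subrKC.
Qed.

Lemma Huni_proj_stable x : Huni S x -> Huni S (PM x).
Proof.
have iterE k u : PM (iter k S u) = iter k S (PM u).
  by elim: k => //= k <-; exact: proj_reducing_comm.
by move=> hx k; have [u ->] := hx k; exists (PM u); rewrite iterE.
Qed.

Lemma Hiso_proj_stable x : Hiso S Ss x -> Hiso S Ss (PM x).
Proof.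
move=> /Hiso_perpE hx; apply/Hiso_perpE => y hy.
by rewrite (proj_dot_sym hPM) hx //; apply: Huni_proj_stable.
Qed.

Lemma reducing_Piso_Puni x : M x -> M (Piso x) /\ M (Puni x).
Proof.
move=> hx; have hI := Hiso_proj_stable (proj_in hPiso x).
have hU := Huni_proj_stable (proj_in hPuni x).
have xE : x = PM (Piso x) + PM (Puni x).
  by rewrite -lin_opD ?Piso_add_Puni ?(proj_id hPM hM) //; exact: proj_lin_op.
split.
- rewrite (proj_unique hPiso (subspace_linear Hiso_subspace) hI (proj1 (Huni_perpE _) hU) xE).
  exact: (proj_in hPM (Piso x)).
- rewrite addrC in xE.
  rewrite (proj_unique hPuni Huni_linear hU (proj1 (Hiso_perpE _) hI) xE).
  exact: (proj_in hPM (Puni x)).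
Qed.

End ReducingSubspace.

Lemma sub_Hiso_of_pure_on L PL : is_subspace L -> orth_proj L PL ->
  reduces L S Ss -> pure_on S L -> subset_of L (Hiso S Ss).
Proof.
(* [S] is unitary on [L :&: Huni S], so purity kills the unitary part of [x]. *)
move=> hL hPL hred [_ pure] x hx.
pose N y := L y /\ Huni S y.
have hNu : unitary_on S N.
  apply: unitary_on_of_sub_Huni => [|y []//].
  split=> y [hy hu]; split; [exact: hred.1 | exact: Huni_invariant hu |
                              exact: hred.2 | exact: Huni_adj_invariant hu].
have Puni0 : Puni x = 0.
  apply: (pure N (subspaceI hL Huni_subspace) (fun y hy => hy.1) hNu (Puni x)); split.
  - exact: (reducing_Piso_Puni hPL (subspace_linear hL) hred hx).2.
  - exact: (proj_in hPuni x).
by rewrite -(Piso_add_Puni x) Puni0 addr0; exact: (proj_in hPiso x).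
Qed.

End Isometry.

Definition comp_seq (T I : Type) (P : I -> T -> T) (s : seq I) : T -> T :=
  foldr (fun i f => P i \o f) id s.

Section CompSeq.
Variables (T : Type) (I : eqType).
Implicit Types (P Q : I -> T -> T) (A : T -> Prop) (s : seq I) (x : T).

Lemma comp_seq_cat P s1 s2 x : comp_seq P (s1 ++ s2) x = comp_seq P s1 (comp_seq P s2 x).
Proof. by elim: s1 => //= i s1 ->. Qed.

Lemma eq_in_comp_seq P Q s x :
  (forall i, i \in s -> P i =1 Q i) -> comp_seq P s x = comp_seq Q s x.
Proof.
elim: s => //= i s IH PQ; rewrite PQ ?mem_head // IH // => j js.
by apply: PQ; rewrite inE js orbT.
Qed.

Lemma comp_seq_in A P i s x : (forall j y, A y -> A (P j y)) ->
  (forall y, A (P i y)) -> i \in s -> A (comp_seq P s x).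
Proof.
move=> hA hi; elim: s => //= j s IH; rewrite inE => /orP[/eqP <-|/IH]; first exact: hi.
exact: hA.
Qed.

Lemma comp_seq_id P s x : (forall i, i \in s -> P i x = x) -> comp_seq P s x = x.
Proof.
elim: s => //= i s IH hx; rewrite IH ?hx ?mem_head // => j js.
by apply: hx; rewrite inE js orbT.
Qed.

End CompSeq.

Lemma sum_subsetU1 (V : nmodType) (I : finType) (i : I) (S : {set I})
    (F : {set I} -> V) : i \notin S ->
  \sum_(A : {set I} | A \subset i |: S) F A =
    \sum_(A : {set I} | A \subset S) F A + \sum_(A : {set I} | A \subset S) F (i |: A).
Proof.
move=> iS; have subS (A : {set I}) : (A \subset S) = (A \subset i |: S) && (i \notin A).
  by rewrite -subsetD1 setU1K.
rewrite (bigID (fun A : {set I} => i \in A)) [RHS]addrC; congr (_ + _); last first.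
  by apply: eq_bigl => A; rewrite subS.
rewrite (reindex_onto (fun B => i |: B) (fun A => A :\ i)) /=; last first.
  by move=> A /andP[_ iA]; rewrite setD1K.
apply: eq_bigl => B; rewrite setU11 andbT.
apply/andP/idP => [[iBS /eqP <-]|BS].
  by rewrite subS setD11 andbT; exact: subset_trans (subD1set _ _) iBS.
have iB : i \notin B by apply: contra iS; apply: (subsetP BS).
by rewrite setUS // setU1K.
Qed.

Section CompSeqHilbert.
Variables (R : realType) (H : hilbert R).
Local Notation "<< x , y >>" := (@hdot R H x y).
Implicit Types (x y w : H).

Lemma comp_seq_dot (I : eqType) (P : I -> H -> H) s x w :
  (forall i y, i \in s -> <<P i y, w>> = <<y, w>>) -> <<comp_seq P s x, w>> = <<x, w>>.
Proof.
elim: s => //= i s IH hP; rewrite hP ?mem_head // IH // => j y js.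
by apply: hP; rewrite inE js orbT.
Qed.

Lemma comp_seq_norm_le (I : Type) (P : I -> H -> H) s x :
  (forall i y, <<P i y, P i y>> <= <<y, y>>) ->
  <<comp_seq P s x, comp_seq P s x>> <= <<x, x>>.
Proof. by move=> hP; elim: s => //= i s IH; apply: le_trans (hP _ _) IH. Qed.

Lemma sum_comp_seq (I : finType) (P1 P2 : I -> H -> H) (s : seq I) y :
  (forall i x, P1 i x + P2 i x = x) -> uniq s ->
  \sum_(A : {set I} | A \subset [set:: s])
    comp_seq (fun i => if i \in A then P1 i else P2 i) s y = y.
Proof.
(* Expand the identity [prod_(i <- s) (P1 i + P2 i) = id] term by term. *)
move=> hdec; elim: s => [_|i s IH /andP[iNs us]] /=.
  by rewrite set_nil (big_pred1 set0) // => A; rewrite subset0.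
rewrite set_cons sum_subsetU1 ?inE // -big_split /= -[RHS](IH us).
apply: eq_bigr => B BS.
have iB : i \notin B by apply: contra iNs => /(subsetP BS); rewrite inE.
pose choiceB j := if j \in B then P1 j else P2 j.
rewrite setU11 (negbTE iB) addrC (eq_in_comp_seq _ (Q := choiceB)) ?hdec // => j js x.
by rewrite /choiceB in_setU1 (_ : (j == i) = false) //; apply: contraNF iNs => /eqP <-.
Qed.

End CompSeqHilbert.

Section DoublyNonCommuting.
Variables (R : realType) (H : hilbert R) (n : nat).
Local Notation "<< x , y >>" := (@hdot R H x y).
Variables (z : 'I_n -> 'I_n -> R[i]) (V Vs Piso Puni : 'I_n -> H -> H).
Hypotheses (hdnc : doubly_noncommuting z V Vs)
  (hPiso : forall i, orth_proj (Hiso (V i) (Vs i)) (Piso i))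
  (hPuni : forall i, orth_proj (Huni (V i)) (Puni i)).
Implicit Types (i j : 'I_n) (A : {set 'I_n}) (x y : H).

Let V_lin i : lin_op (V i). Proof. by case: hdnc => _ /(_ i) [[]]. Qed.
Let V_adj i : is_adjoint (V i) (Vs i). Proof. by case: hdnc => _ /(_ i) []. Qed.
Let Vs_V i x : Vs i (V i x) = x. Proof. by case: hdnc. Qed.
Let Vs_V_comm i j x : i != j -> Vs i (V j x) = (z i j)^* *: V j (Vs i x).
Proof. by case: hdnc => _ _ _; apply. Qed.
Let norm_z i j : i != j -> `|z i j| = 1. Proof. by case: hdnc => hz _ _ _ /hz []. Qed.

Lemma V_comm i j x : i != j -> V j (V i x) = (z i j)^* *: V i (V j x).
Proof.
(* [Vs i] is isometric on [V j (V i x)], which thus lies in the range of [V i]. *)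
move=> ij; set w := V j (V i x).
have Vs_w : Vs i w = (z i j)^* *: V j x by rewrite /w Vs_V_comm // Vs_V.
rewrite -(lin_opZ _ _ (V_lin i)) -Vs_w (range_of_adj_norm (V_adj i) (Vs_V i)) //.
rewrite Vs_w dotZl dotZr mulrA -normCK norm_conjC norm_z // expr1n mul1r.
by rewrite /w !(V_adj _ _ _) !Vs_V.
Qed.

Lemma Huni_reduces i j : reduces (Huni (V i)) (V j) (Vs j).
Proof.
have [<-|ij] := eqVneq i j.
  by split; [exact: Huni_invariant | exact: Huni_adj_invariant].
split; apply: Huni_stable (V_lin i) _ => x; first exact: V_comm.
by apply: Vs_V_comm; rewrite eq_sym.
Qed.

Lemma Hiso_reduces i j : reduces (Hiso (V i) (Vs i)) (V j) (Vs j).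
Proof.
have HisoE := Hiso_perpE (V_lin i) (V_adj i) (Vs_V i) (hPiso i).
have [hT hTs] := perp_reduces (V_adj j) (Huni_reduces i j).
by split=> x /HisoE hx; apply/HisoE; [apply: hT | apply: hTs].
Qed.

Definition HA_factor A i : H -> Prop :=
  fun x => if i \in A then Hiso (V i) (Vs i) x else Huni (V i) x.

Definition PA_factor A i : H -> H := if i \in A then Piso i else Puni i.

Lemma HA_factor_proj A i : orth_proj (HA_factor A i) (PA_factor A i).
Proof. by rewrite /HA_factor /PA_factor; case: (i \in A). Qed.

Lemma HA_factor_subspace A i : is_subspace (HA_factor A i).
Proof.
rewrite /HA_factor; case: (i \in A).
  exact (Hiso_subspace (V_lin i) (V_adj i) (Vs_V i) (hPiso i)).
exact (Huni_subspace (V_lin i) (V_adj i) (Vs_V i)).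
Qed.

Lemma HA_factor_reduces A i j : reduces (HA_factor A i) (V j) (Vs j).
Proof. by rewrite /HA_factor; case: (i \in A); [exact: Hiso_reduces | exact: Huni_reduces]. Qed.

Lemma PA_factor_stable A i j x : HA_factor A i x -> HA_factor A i (PA_factor A j x).
Proof.
move=> hx; have [] := reducing_Piso_Puni (V_lin j) (V_adj j) (Vs_V j) (hPiso j) (hPuni j)
  (HA_factor_proj A i) (subspace_linear (HA_factor_subspace A i)) (HA_factor_reduces A i j) hx.
by rewrite /PA_factor; case: (j \in A).
Qed.

Lemma PA_comp_seq A x : PA Piso Puni A x = comp_seq (PA_factor A) (enum A ++ enum (~: A)) x.
Proof.
have -> : PA Piso Puni A x = comp_seq Piso (enum A) (comp_seq Puni (enum (~: A)) x) by [].
rewrite comp_seq_cat (@eq_in_comp_seq _ _ Puni (PA_factor A)) => [|i]; last first.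
  by rewrite mem_enum inE /PA_factor => /negbTE iA y; rewrite iA.
by apply: eq_in_comp_seq => i; rewrite mem_enum /PA_factor => iA y; rewrite iA.
Qed.

Local Notation HA A := (range (PA Piso Puni A)).

Lemma HA_char A x : HA A x <-> forall i, HA_factor A i x.
Proof.
split=> [[y ->] i|hx].
  rewrite PA_comp_seq; apply: (comp_seq_in (A := HA_factor A i) (i := i)).
  - by move=> j w; apply: PA_factor_stable.
  - exact: proj_in (HA_factor_proj A i).
  - by rewrite mem_cat !mem_enum inE orbN.
exists x; rewrite PA_comp_seq comp_seq_id // => i _.
exact: proj_id (HA_factor_proj A i) (subspace_linear (HA_factor_subspace A i)) _ (hx i).
Qed.

Lemma HA_subspace A : is_subspace (HA A).
Proof. exact: subspace_eq (HA_char A) (subspace_bigcap (HA_factor_subspace A)). Qed.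

Lemma HA_orthogonal A B x y : A != B -> HA A x -> HA B y -> <<x, y>> = 0.
Proof.
move=> AB /HA_char hx /HA_char hy.
have [i iAB] : exists i, (i \in A) != (i \in B).
  case: (pickP (fun i => (i \in A) != (i \in B))) => [i|same]; first by exists i.
  by case/eqP: AB; apply/setP => i; apply/eqP/negbFE/same.
move: (hx i) (hy i) iAB; rewrite /HA_factor; case: (i \in A); case: (i \in B) => //= hxi hyi _.
  exact (Hiso_perp_Huni (V_adj i) (Vs_V i) hxi hyi).
exact: dot0_sym (Hiso_perp_Huni (V_adj i) (Vs_V i) hyi hxi).
Qed.

Lemma HA_sum x : exists f : {set 'I_n} -> H,
  (forall A, HA A (f A)) /\ x = \sum_(A : {set 'I_n}) f A.
Proof.
exists (fun A => comp_seq (PA_factor A) (enum 'I_n) x); split.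
  move=> A; apply/HA_char => i; apply: (comp_seq_in (A := HA_factor A i) (i := i)).
  - by move=> j w; apply: PA_factor_stable.
  - exact: proj_in (HA_factor_proj A i).
  - by rewrite mem_enum.
have Piso_Puni i y : Piso i y + Puni i y = y.
  exact (Piso_add_Puni (V_lin i) (V_adj i) (Vs_V i) (hPiso i) (hPuni i) y).
rewrite -[in LHS](sum_comp_seq x Piso_Puni (enum_uniq 'I_n)).
by apply: eq_bigl => A; apply/subsetP => i _; rewrite inE mem_enum.
Qed.

Lemma HA_reduces A i : reduces (HA A) (V i) (Vs i).
Proof.
split=> x /HA_char hx; apply/HA_char => k; have [hV hVs] := HA_factor_reduces A k i.
- exact: hV (hx k).
- exact: hVs (hx k).
Qed.

Lemma HA_pure_unitary A i :
  if i \in A then pure_on (V i) (HA A) else unitary_on (V i) (HA A).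
Proof.
have : subset_of (HA A) (HA_factor A i) by move=> x /HA_char; apply.
rewrite /HA_factor; case: (i \in A) => sub.
  exact (pure_on_of_sub_Hiso (V_adj i) (Vs_V i) (HA_reduces A i) sub).
exact (unitary_on_of_sub_Huni (Vs_V i) (HA_reduces A i) sub).
Qed.

Section ReducingSubspace.
Variables (L : H -> Prop) (PL : H -> H) (A : {set 'I_n}).
Hypotheses (hL : is_subspace L) (hred : forall i, reduces L (V i) (Vs i))
  (hPL : orth_proj L PL).

Lemma pure_unitary_sub_HA :
  (forall i, if i \in A then pure_on (V i) L else unitary_on (V i) L) <->
  subset_of L (HA A).
Proof.
have sub_factor i : (if i \in A then pure_on (V i) L else unitary_on (V i) L) <->
    subset_of L (HA_factor A i).
  rewrite /HA_factor; case: (i \in A); split.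
  - exact (sub_Hiso_of_pure_on (V_lin i) (V_adj i) (Vs_V i) (hPiso i) (hPuni i)
             hL hPL (hred i)).
  - exact (pure_on_of_sub_Hiso (V_adj i) (Vs_V i) (hred i)).
  - by move=> hU x; exact (Huni_of_unitary_on hU).
  - exact (unitary_on_of_sub_Huni (Vs_V i) (hred i)).
split=> [h x hx|h i]; first by apply/HA_char => i; exact: (sub_factor i).1 (h i) x hx.
by apply/sub_factor => x /h /HA_char; apply.
Qed.

Lemma sub_HA_proj : subset_of L (HA A) <-> (forall x, PL (PA Piso Puni A x) = PL x).
Proof.
have hLlin := subspace_linear hL.
split=> [sub x|hfix l hl].
  apply/subr0_eq; rewrite -(lin_opB _ _ (proj_lin_op hPL hLlin)).
  apply: (proj_eq0 hPL hLlin) => l hl.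
  rewrite dotBl PA_comp_seq comp_seq_dot ?subrr // => j y _.
  have /HA_char /(_ j) l_factor := sub l hl.
  rewrite (proj_dot_sym (HA_factor_proj A j)).
  by rewrite (proj_id (HA_factor_proj A j) (subspace_linear (HA_factor_subspace A j)) l_factor).
(* [PA] is a contraction, so [PL (PA l) = l] forces [PA l = l]. *)
have PLw : PL (PA Piso Puni A l) = l by rewrite hfix (proj_id hPL hLlin hl).
exists l; rewrite -[in LHS]PLw (proj_id_of_norm hPL) // PLw PA_comp_seq.
by apply: comp_seq_norm_le => j y; apply: proj_norm_le (HA_factor_proj A j) y.
Qed.

End ReducingSubspace.

End DoublyNonCommuting.

Theorem theorem3p4 (R : realType) (H : hilbert R) (n : nat)
  (z : 'I_n -> 'I_n -> R[i]) (V Vs : 'I_n -> H -> H)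
  (Piso Puni : 'I_n -> H -> H) :
  doubly_noncommuting z V Vs ->
  (forall i, orth_proj (Hiso (V i) (Vs i)) (Piso i)) ->
  (forall i, orth_proj (Huni (V i)) (Puni i)) ->
  let HA := fun A : {set 'I_n} => range (PA Piso Puni A) in
  (* description of H_A *)
  (forall A : {set 'I_n}, forall x : H,
      HA A x <->
      (forall i, if i \in A then Hiso (V i) (Vs i) x else Huni (V i) x)) /\
  (* H = orthogonal Hilbert direct sum of the H_A *)
  (forall A : {set 'I_n}, is_subspace (HA A)) /\
  (forall (A B : {set 'I_n}) (x y : H), A != B -> HA A x -> HA B y ->
      hdot x y = 0) /\
  (forall x : H, exists f : {set 'I_n} -> H,
      (forall A, HA A (f A)) /\ x = \sum_(A : {set 'I_n}) f A) /\
  (* each H_A reduces each V_i *)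
  (forall (A : {set 'I_n}) (i : 'I_n), reduces (HA A) (V i) (Vs i)) /\
  (* V_i|H_A is pure for i in A and unitary for i in A^c *)
  (forall (A : {set 'I_n}) (i : 'I_n), if i \in A then pure_on (V i) (HA A) else unitary_on (V i) (HA A)) /\
  (* characterization of reducing subspaces contained in H_A *)
  (forall (L : H -> Prop) (PL : H -> H) (A : {set 'I_n}),
      is_subspace L -> (forall i, reduces L (V i) (Vs i)) -> orth_proj L PL ->
      [/\ (forall i, if i \in A then pure_on (V i) L else unitary_on (V i) L)
             <-> subset_of L (HA A),
          subset_of L (HA A) <-> (forall x, PL (PA Piso Puni A x) = PL x)
        & (forall x, PL (PA Piso Puni A x) = PL x) <->
             (forall i, if i \in A then pure_on (V i) L else unitary_on (V i) L)]).
Proof.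
move=> hdnc hPiso hPuni HA.
split; first exact: HA_char hdnc hPiso hPuni.
split; first exact: HA_subspace hdnc hPiso hPuni.
split; first exact: HA_orthogonal hdnc hPiso hPuni.
split; first exact: HA_sum hdnc hPiso hPuni.
split; first exact: HA_reduces hdnc hPiso hPuni.
split; first exact: HA_pure_unitary hdnc hPiso hPuni.
move=> L PL A hL hred hPL.
have E12 := pure_unitary_sub_HA hdnc hPiso hPuni A hL hred hPL.
have E23 := sub_HA_proj hdnc hPiso hPuni A hL hPL.
by split; [exact: E12 | exact: E23 | exact: iff_trans (iff_sym E23) (iff_sym E12)].
Qed.
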